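(* Let $\mathbf v,\mathbf o\in\mathbb{R}^n$, $\mathbf u\in\mathbb{R}^n\setminus\{0\}$, $d\in\mathbb{R}$ and $r>0$, and consider the problem $$f^*=\min_{\mathbf w\in\mathbb{R}^n}\mathbf v^T\mathbf w\quad\text{s.t.}\quad\mathbf u^T\mathbf w\le d,\ \ \|\mathbf w-\mathbf o\|\le r,$$ assumed feasible in the sense that $\frac{|\mathbf u^T\mathbf o-d|}{\|\mathbf u\|}\le r$. Let $d'=d-\mathbf u^T\mathbf o$. Then: 1. If $\mathbf v^T\mathbf u+\frac{\|\mathbf v\|d'}{r}\ge0$, then $f^*=\mathbf v^T\mathbf o-r\|\mathbf v\|$. 2. Otherwise, $$f^*=\mathbf v^T\mathbf o-\|\mathbf v^\perp\|\sqrt{r^2-\frac{(d')^2}{\|\mathbf u\|^2}}+\frac{\mathbf v^T\mathbf u\,d'}{\|\mathbf u\|^2},$$ where $\mathbf v^\perp=\mathbf v-\frac{\mathbf v^T\mathbf u}{\|\mathbf u\|^2}\mathbf u$.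
   Context: $\|\cdot\|$ denotes the Euclidean norm. *)

From HB Require Import structures.
From mathcomp Require Import all_boot all_order all_algebra.
From mathcomp Require Import reals.
Set Implicit Arguments. Unset Strict Implicit. Unset Printing Implicit Defensive.
Import Order.TTheory GRing.Theory Num.Theory.
Local Open Scope ring_scope.

Definition dotv (R : realType) (n : nat) (x y : 'rV[R]_n) : R :=
  \sum_(i < n) x ord0 i * y ord0 i.

Definition normv (R : realType) (n : nat) (x : 'rV[R]_n) : R :=
  Num.sqrt (dotv x x).

Definition feasible (R : realType) (n : nat) (u o : 'rV[R]_n) (d r : R)
  (w : 'rV[R]_n) : Prop :=
  dotv u w <= d /\ normv (w - o) <= r.

Definition is_min_value (R : realType) (n : nat) (v u o : 'rV[R]_n) (d r f : R)
  : Prop :=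
  (exists w, feasible u o d r w /\ dotv v w = f) /\
  (forall w, feasible u o d r w -> f <= dotv v w).

(* Translating by o reduces the problem to o = 0. For every multiplier
   lam >= 0, weak duality bounds v^T w below by -r |v + lam u| - lam d on the
   feasible set. If the half-space constraint is inactive, lam = 0 suffices and
   the minimiser -(r/|v|) v of the ball is feasible. Otherwise the minimiser is
   (d/|u|^2) u - s v^perp/|v^perp| on the hyperplane u^T w = d, where s is the
   radius of the cap cut from the ball, and the multiplier
   lam = -(u^T v s + d |v^perp|) / (|u|^2 s), nonnegative precisely because the
   constraint is active, certifies it. When s = 0 the feasible set is the
   single point (d/|u|^2) u. *)

From HB Require Import structures.
From mathcomp Require Import all_boot all_order all_algebra.
From mathcomp Require Import reals.
From mathcomp Require Import ring lra.
Import Order.TTheory GRing.Theory Num.Theory.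
Set Implicit Arguments. Unset Strict Implicit.
Local Open Scope ring_scope.

Section InnerProduct.
Variables (R : realType) (n : nat).
Implicit Types (x y z : 'rV[R]_n) (a : R).

Lemma dotvC x y : dotv x y = dotv y x.
Proof. by apply: eq_bigr => i _; rewrite mulrC. Qed.

Lemma dotvDr x y z : dotv x (y + z) = dotv x y + dotv x z.
Proof. by rewrite /dotv -big_split; apply: eq_bigr => i _; rewrite mxE mulrDr. Qed.

Lemma dotvZr x a y : dotv x (a *: y) = a * dotv x y.
Proof. by rewrite /dotv mulr_sumr; apply: eq_bigr => i _; rewrite mxE mulrCA. Qed.

Lemma dotvNr x y : dotv x (- y) = - dotv x y.
Proof. by rewrite -scaleN1r dotvZr mulN1r. Qed.

Lemma dotvBr x y z : dotv x (y - z) = dotv x y - dotv x z.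
Proof. by rewrite dotvDr dotvNr. Qed.

Lemma dotvDl x y z : dotv (y + z) x = dotv y x + dotv z x.
Proof. by rewrite dotvC dotvDr !(dotvC x). Qed.

Lemma dotvZl x a y : dotv (a *: y) x = a * dotv y x.
Proof. by rewrite dotvC dotvZr dotvC. Qed.

Lemma dotvBl x y z : dotv (y - z) x = dotv y x - dotv z x.
Proof. by rewrite dotvC dotvBr !(dotvC x). Qed.

Lemma dotv0r x : dotv x 0 = 0.
Proof. by rewrite -(scale0r (0 : 'rV[R]_n)) dotvZr mul0r. Qed.

Lemma dotv0l x : dotv 0 x = 0.
Proof. by rewrite dotvC dotv0r. Qed.

Lemma normv0 : normv (0 : 'rV[R]_n) = 0.
Proof. by rewrite /normv dotv0r sqrtr0. Qed.

Lemma dotvv_ge0 x : 0 <= dotv x x.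
Proof. by apply: sumr_ge0 => i _; rewrite -expr2 sqr_ge0. Qed.

Lemma dotvv_eq0 x : dotv x x = 0 -> x = 0.
Proof.
move=> /eqP; rewrite psumr_eq0 => [/allP x0|i _]; last by rewrite -expr2 sqr_ge0.
apply/rowP => i; rewrite mxE; have := x0 i (mem_index_enum _).
by rewrite -expr2 sqrf_eq0 => /eqP.
Qed.

Lemma normv_ge0 x : 0 <= normv x.
Proof. exact: sqrtr_ge0. Qed.

Lemma normv_sq x : normv x ^+ 2 = dotv x x.
Proof. by rewrite sqr_sqrtr // dotvv_ge0. Qed.

Lemma normv_eq0 x : normv x = 0 -> x = 0.
Proof. by move=> x0; apply: dotvv_eq0; rewrite -normv_sq x0 expr0n. Qed.

Lemma normv_gt0 x : x != 0 -> 0 < normv x.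
Proof. by move=> x0; rewrite lt0r normv_ge0 andbT; apply: contra x0 => /eqP/normv_eq0->. Qed.

Lemma normvZ a x : normv (a *: x) = `|a| * normv x.
Proof.
rewrite /normv dotvZl dotvZr mulrA -expr2 sqrtrM ?sqr_ge0 //.
by rewrite sqrtr_sqr.
Qed.

Lemma normv_le x a : 0 <= a -> (normv x <= a) = (dotv x x <= a ^+ 2).
Proof. by move=> a0; rewrite -normv_sq ler_sqr // nnegrE normv_ge0. Qed.

Lemma normvD_orth x y :
  dotv x y = 0 -> normv (x + y) ^+ 2 = normv x ^+ 2 + normv y ^+ 2.
Proof.
by move=> xy; rewrite !normv_sq !dotvDl !dotvDr (dotvC y x) xy addr0 add0r.
Qed.

(* Cauchy-Schwarz, from the expansion of | |y| x + |x| y |^2 >= 0. *)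
Lemma dotv_ge_normN x y : - (normv x * normv y) <= dotv x y.
Proof.
have [->|x0] := eqVneq x 0; first by rewrite dotv0l normv0 mul0r oppr0.
have [->|y0] := eqVneq y 0; first by rewrite dotv0r normv0 mulr0 oppr0.
have := dotvv_ge0 (normv y *: x + normv x *: y).
rewrite !dotvDl !dotvDr !dotvZl !dotvZr (dotvC y x) -!normv_sq.
have := mulr_gt0 (normv_gt0 x0) (normv_gt0 y0); nra.
Qed.

End InnerProduct.

Definition perpv (R : realType) (n : nat) (u v : 'rV[R]_n) : 'rV[R]_n :=
  v - (dotv v u / normv u ^+ 2) *: u.

Section Perp.
Variables (R : realType) (n : nat) (u v : 'rV[R]_n).

Lemma perpv_decomp : v = (dotv v u / normv u ^+ 2) *: u + perpv u v.
Proof. by rewrite /perpv addrC subrK. Qed.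

Lemma dotv_perpv : dotv u (perpv u v) = 0.
Proof.
have [->|u0] := eqVneq u 0; first by rewrite dotvC dotv0r.
rewrite dotvBr dotvZr (dotvC u v) -normv_sq divfK ?subrr //.
by rewrite expf_neq0 // gt_eqF // normv_gt0.
Qed.

Lemma normv_sq_perpv :
  normv v ^+ 2 = dotv v u ^+ 2 / normv u ^+ 2 + normv (perpv u v) ^+ 2.
Proof.
rewrite {1}perpv_decomp normvD_orth; last by rewrite dotvZl dotv_perpv mulr0.
congr (_ + _); rewrite normvZ exprMn real_normK ?num_real //.
have [->|u0] := eqVneq u 0; first by rewrite dotv0r !(mul0r, expr0n).
field; exact/lt0r_neq0/normv_gt0.
Qed.

End Perp.

Lemma feasible0 (R : realType) (n : nat) (u : 'rV[R]_n) d r x :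
  feasible u 0 d r x <-> dotv u x <= d /\ normv x <= r.
Proof. by rewrite /feasible subr0. Qed.

Lemma is_min_value_translate (R : realType) (n : nat) (v u o : 'rV[R]_n) d r f :
  is_min_value v u 0 (d - dotv u o) r f -> is_min_value v u o d r (dotv v o + f).
Proof.
move=> [[x [/feasible0 [ux nx] <-]] minf]; split.
  exists (o + x); rewrite /feasible addrAC subrr add0r !dotvDr.
  by do !split=> //; lra.
move=> w [uw nw]; rewrite -lerBrDl -dotvBr; apply: minf; apply/feasible0.
by rewrite dotvBr; split=> //; lra.
Qed.

Section CenteredProblem.
Variables (R : realType) (n : nat) (u : 'rV[R]_n) (d r : R).

Lemma feasible0_dual_bound v lam x : 0 <= lam -> feasible u 0 d r x ->
  - (r * normv (v + lam *: u)) - lam * d <= dotv v x.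
Proof.
move=> lam0 /feasible0 [ux nx].
have cs := dotv_ge_normN (v + lam *: u) x; rewrite dotvDl dotvZl in cs.
have := ler_wpM2l (normv_ge0 (v + lam *: u)) nx.
have := ler_wpM2l lam0 ux; lra.
Qed.

Hypothesis u0 : u != 0.

Lemma feasible0_hyperplane y : 0 <= r -> dotv u y = 0 ->
  normv y ^+ 2 <= r ^+ 2 - d ^+ 2 / normv u ^+ 2 ->
  feasible u 0 d r ((d / normv u ^+ 2) *: u + y).
Proof.
move=> r0 uy ny; have N0 := normv_gt0 u0; apply/feasible0; split.
  by rewrite dotvDr uy addr0 dotvZr -normv_sq divfK // lt0r_neq0 ?exprn_gt0.
rewrite normv_le // -normv_sq normvD_orth; last by rewrite dotvZl uy mulr0.
rewrite normvZ exprMn real_normK ?num_real //.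
suff -> : (d / normv u ^+ 2) ^+ 2 * normv u ^+ 2 = d ^+ 2 / normv u ^+ 2 by lra.
by field; exact: lt0r_neq0.
Qed.

Lemma feasible0_tangent x : d <= 0 -> normv u ^+ 2 * r ^+ 2 = d ^+ 2 ->
  feasible u 0 d r x -> x = (d / normv u ^+ 2) *: u.
Proof.
move=> d0 dr /feasible0 [ux nx]; have N0 : 0 < normv u ^+ 2 by rewrite exprn_gt0 // normv_gt0.
apply/eqP; rewrite -subr_eq0; apply/eqP/normv_eq0/eqP.
set N := normv u ^+ 2 in N0 dr *; set c := d / N.
rewrite -sqrf_eq0 eq_le sqr_ge0 andbT normv_sq.
have cN : c * N = d by rewrite divfK // lt0r_neq0.
have c0 : c <= 0 by rewrite mulr_le0_ge0 // invr_ge0 ltW.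
have rc : r ^+ 2 = c * d by apply: (mulfI (lt0r_neq0 N0)); rewrite dr mulrA (mulrC N) cN expr2.
have : dotv x x <= r ^+ 2 by rewrite -normv_le // (le_trans (normv_ge0 x)).
rewrite dotvBl !dotvBr !dotvZl !dotvZr (dotvC x u) -(normv_sq u) -/N cN rc.
have : c * (d - dotv u x) <= 0 by rewrite mulr_le0_ge0 // subr_ge0.
lra.
Qed.

End CenteredProblem.

(* Applied with a = v^T u, b = d, V = |v|, P = |v^perp|, N = |u|^2 and s the
   radius of the cap cut from the ball by the hyperplane u^T w = d; cross_le0
   is then the sign of the Lagrange multiplier of the active constraint. *)
Section CrossTerms.
Variables (R : realFieldType) (a b r s P V N : R).
Hypotheses (N0 : N != 0) (r0 : 0 <= r) (V0 : 0 <= V).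
Hypothesis hV : N * V ^+ 2 = a ^+ 2 + N * P ^+ 2.

Lemma sqr_cross_diff : N * r ^+ 2 = N * s ^+ 2 + b ^+ 2 ->
  (a * r) ^+ 2 - (V * b) ^+ 2 = (a * s) ^+ 2 - (b * P) ^+ 2.
Proof.
move=> hr; apply: (mulfI N0).
transitivity (a ^+ 2 * (N * r ^+ 2) - b ^+ 2 * (N * V ^+ 2)); first by ring.
by rewrite hr hV; ring.
Qed.

Lemma cross_le0 : 0 <= s -> 0 <= P -> N * r ^+ 2 = N * s ^+ 2 + b ^+ 2 ->
  a * r + V * b < 0 -> a * s + b * P <= 0.
Proof.
move=> s0 P0 hr hab; have key := sqr_cross_diff hr.
have [a0|a0] := lerP 0 a; have [b0|b0] := lerP 0 b.
- by have := mulr_ge0 a0 r0; have := mulr_ge0 V0 b0; lra.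
- by have := mulr_ge0 a0 r0; have := mulr_ge0 a0 s0; have := mulr_le0_ge0 (ltW b0) P0; nra.
- by have := mulr_ge0 V0 b0; have := mulr_le0_ge0 (ltW a0) s0; have := mulr_ge0 b0 P0; nra.
- by have := mulr_le0_ge0 (ltW a0) s0; have := mulr_le0_ge0 (ltW b0) P0; lra.
Qed.

End CrossTerms.

Lemma tangent_le0 (R : realFieldType) (a b r P V N : R) :
  N != 0 -> 0 <= r -> 0 <= V -> N * V ^+ 2 = a ^+ 2 + N * P ^+ 2 ->
  N * r ^+ 2 = b ^+ 2 -> a * r + V * b < 0 -> b <= 0.
Proof.
move=> N0 r0 V0 hV hr hab; rewrite leNgt; apply/negP => b0.
have := sqr_cross_diff (r := r) (s := 0) (b := b) N0 hV.
rewrite expr0n /= !mulr0 add0r => /(_ hr) key.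
by have := mulr_ge0 V0 (ltW b0); have := sqr_ge0 (b * P); nra.
Qed.

Section CenteredMinimum.
Variables (R : realType) (n : nat) (v u : 'rV[R]_n) (d r : R).
Hypotheses (u0 : u != 0) (r0 : 0 < r) (hd : `|d| <= r * normv u).

Local Notation N := (normv u ^+ 2).
Local Notation p := (perpv u v).
Local Notation s := (Num.sqrt (r ^+ 2 - d ^+ 2 / N)).

Lemma sqr_normv_gt0 : 0 < N.
Proof. by rewrite exprn_gt0 // normv_gt0. Qed.

Lemma sqr_le_ball : d ^+ 2 / N <= r ^+ 2.
Proof.
rewrite ler_pdivrMr ?sqr_normv_gt0 // -exprMn -real_normK ?num_real //.
by rewrite ler_sqr ?nnegrE ?normr_ge0 // mulr_ge0 ?normv_ge0 // ltW.
Qed.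

Lemma sqr_radius_split : N * r ^+ 2 = N * s ^+ 2 + d ^+ 2.
Proof.
rewrite sqr_sqrtr ?subr_ge0 ?sqr_le_ball //.
by field; exact: lt0r_neq0 (normv_gt0 u0).
Qed.

Lemma sqr_normv_split : N * normv v ^+ 2 = dotv v u ^+ 2 + N * normv p ^+ 2.
Proof. by rewrite (normv_sq_perpv u v); field; exact: lt0r_neq0 (normv_gt0 u0). Qed.

Lemma is_min_value_inactive : 0 <= dotv v u + normv v * d / r ->
  is_min_value v u 0 d r (- (r * normv v)).
Proof.
move=> hv; split; last first.
  move=> x /(feasible0_dual_bound v (lam := 0) (lexx 0)).
  by rewrite scale0r addr0 !mul0r subr0.
have [->|v0] := eqVneq v 0.
  exists ((d / N) *: u + 0); rewrite dotv0l normv0 mulr0 oppr0.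
  split=> //; apply: (feasible0_hyperplane u0 (ltW r0) (dotv0r u)).
  by rewrite normv0 expr0n subr_ge0 sqr_le_ball.
have V0 := normv_gt0 v0.
exists (- (r / normv v) *: v); split; last first.
  by rewrite dotvZr -normv_sq; field; exact: lt0r_neq0.
apply/feasible0; split.
  rewrite dotvZr dotvC.
  have : 0 <= r / normv v * (dotv v u + normv v * d / r).
    by rewrite mulr_ge0 // divr_ge0 // ltW.
  suff -> : r / normv v * (dotv v u + normv v * d / r) = r / normv v * dotv v u + d.
    by lra.
  by field; rewrite !lt0r_neq0.
by rewrite normvZ normrN ger0_norm ?divfK ?lt0r_neq0 // divr_ge0 // ltW.
Qed.

Section ActiveConstraint.
Hypothesis hv : dotv v u + normv v * d / r < 0.

Lemma active_cross_lt0 : dotv v u * r + normv v * d < 0.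
Proof.
suff -> : dotv v u * r + normv v * d = (dotv v u + normv v * d / r) * r.
  by rewrite pmulr_llt0.
by field; exact: lt0r_neq0.
Qed.

Lemma active_value_attained : exists w, feasible u 0 d r w /\
  dotv v w = - (normv p * s) + dotv v u * d / N.
Proof.
have P0 := normv_ge0 p; have s0 : 0 <= s := sqrtr_ge0 _.
have hsP : s / normv p * normv p <= s /\ s / normv p * normv p ^+ 2 = s * normv p.
  have [->|P_neq0] := eqVneq (normv p) 0; first by rewrite !mulr0 expr0n mulr0.
  by rewrite divfK // expr2 mulrA divfK.
exists ((d / N) *: u + - (s / normv p) *: p); split.
  apply: (feasible0_hyperplane u0 (ltW r0)); first by rewrite dotvZr dotv_perpv mulr0.
  have ss : s ^+ 2 = r ^+ 2 - d ^+ 2 / N by rewrite sqr_sqrtr // subr_ge0 sqr_le_ball.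
  rewrite -[X in _ <= X]ss normvZ normrN ger0_norm ?divr_ge0 //.
  rewrite ler_sqr ?nnegrE ?(proj1 hsP) //.
  by rewrite mulr_ge0 // divr_ge0.
have vp : dotv v p = normv p ^+ 2.
  by rewrite {1}(perpv_decomp u v) dotvDl dotvZl dotv_perpv mulr0 add0r normv_sq.
by rewrite dotvDr !dotvZr vp mulNr (proj2 hsP); ring.
Qed.

Lemma active_value_le x : feasible u 0 d r x ->
  - (normv p * s) + dotv v u * d / N <= dotv v x.
Proof.
move=> fx; have N0 := sqr_normv_gt0; have s0 : 0 <= s := sqrtr_ge0 _.
have [s_eq0|s_neq0] := eqVneq s 0.
  have hr0 : N * r ^+ 2 = d ^+ 2 by rewrite sqr_radius_split s_eq0 expr0n mulr0 add0r.
  have d0 := tangent_le0 (lt0r_neq0 N0) (ltW r0) (normv_ge0 v) sqr_normv_split hr0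
    active_cross_lt0.
  rewrite (feasible0_tangent u0 d0 hr0 fx) dotvZr s_eq0 mulr0 oppr0 add0r.
  by rewrite le_eqVlt; apply/orP; left; apply/eqP; ring.
have hr := sqr_radius_split; have hab := active_cross_lt0.
(* Abstract s, so that rewriting with hr cannot reach the r inside it. *)
move: s0 s_neq0 hr; set t := Num.sqrt _ => t0 t_neq0 hr.
set lam := - (dotv v u * t + d * normv p) / (N * t).
have lam0 : 0 <= lam.
  apply: divr_ge0; last by rewrite mulr_ge0 // ltW.
  rewrite oppr_ge0.
  exact: cross_le0 (lt0r_neq0 N0) (ltW r0) (normv_ge0 v) sqr_normv_split t0
    (normv_ge0 p) hr hab.
have lam_normv : normv (v + lam *: u) = normv p * r / t.
  have -> : v + lam *: u = (dotv v u / N + lam) *: u + p.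
    by rewrite {1}(perpv_decomp u v) addrAC -scalerDl.
  apply: (pexpIrn (n := 2)) => //; rewrite ?nnegrE ?normv_ge0 //.
    by rewrite divr_ge0 ?mulr_ge0 ?normv_ge0 // ltW.
  rewrite normvD_orth ?dotvZl ?dotv_perpv ?mulr0 // normvZ exprMn real_normK ?num_real //.
  rewrite !exprMn -[r ^+ 2](mulKf (lt0r_neq0 N0)) hr /lam.
  by field; rewrite t_neq0 lt0r_neq0 ?normv_gt0.
apply: (le_trans _ (feasible0_dual_bound v lam0 fx)); rewrite lam_normv.
have -> : r * (normv p * r / t) = normv p * (N * r ^+ 2) / (N * t).
  by field; rewrite t_neq0 lt0r_neq0 ?normv_gt0.
rewrite hr /lam le_eqVlt; apply/orP; left; apply/eqP.
by field; rewrite t_neq0 lt0r_neq0 ?normv_gt0.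
Qed.

End ActiveConstraint.

Lemma is_min_value_active : dotv v u + normv v * d / r < 0 ->
  is_min_value v u 0 d r (- (normv p * s) + dotv v u * d / N).
Proof. by move=> hv; split; [apply: active_value_attained | apply: active_value_le]. Qed.

End CenteredMinimum.

Theorem lemma8 (R : realType) (n : nat) (v o u : 'rV[R]_n) (d r : R)
  (hu : u != 0) (hr : 0 < r)
  (hfeas : `|dotv u o - d| / normv u <= r) :
  let d' := d - dotv u o in
  (0 <= dotv v u + normv v * d' / r ->
     is_min_value v u o d r (dotv v o - r * normv v)) /\
  (dotv v u + normv v * d' / r < 0 ->
     is_min_value v u o d r
       (dotv v o
        - normv (v - (dotv v u / normv u ^+ 2) *: u)
            * Num.sqrt (r ^+ 2 - d' ^+ 2 / normv u ^+ 2)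
        + dotv v u * d' / normv u ^+ 2)).
Proof.
move=> d'.
have hd : `|d'| <= r * normv u by rewrite -ler_pdivrMr ?normv_gt0 // distrC.
split=> hv.
  exact: is_min_value_translate (is_min_value_inactive hu hr hd hv).
rewrite -addrA; exact: is_min_value_translate (is_min_value_active hu hr hd hv).
Qed.
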